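(* For every integer $n \geq 4$, the graph $G_n$ has chromatic number $n-2$ and is edge-critical, i.e., $\chi(G_n - e) < \chi(G_n)$ for every edge $e$ of $G_n$.
   Context: Let $[n]=\{1,\dots,n\}$. A $2$-subset $\{a,b\}$ of $[n]$ with $a<b$ is called stable if $b \neq a+1$ and $\{a,b\}\neq\{1,n\}$; it is written $ab$. For $n\ge 4$, the graph $G_n$ has as vertex set all stable $2$-subsets of $[n]$. Two vertices $ab$ ($a<b$) and $cd$ ($c<d$) with $a<c$ are adjacent in $G_n$ if and only if $\{a,b\}\cap\{c,d\}=\emptyset$ and one of the following holds: $a<c<b<d$ (a crossing pair), or $1<a<c<d<b$ (a transverse pair). $\chi$ denotes chromatic number. *)

From mathcomp Require Import all_boot.
Set Implicit Arguments. Unset Strict Implicit. Unset Printing Implicit Defensive.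

Definition colorable (T : finType) (e : rel T) (k : nat) : bool :=
  [exists f : {ffun T -> 'I_k}, [forall x, forall y, e x y ==> (f x != f y)]].

Lemma colorable_card (T : finType) (e : rel T) (irr : irreflexive e) :
  exists k, colorable e k.
Proof.
exists #|T|; apply/existsP; exists [ffun x => enum_rank x].
apply/forallP => x; apply/forallP => y; apply/implyP => exy.
rewrite !ffunE; apply/negP => /eqP/enum_rank_inj exy'.
by move: exy; rewrite exy' irr.
Qed.

Definition chi (T : finType) (e : rel T) (irr : irreflexive e) : nat :=
  ex_minn (colorable_card irr).

Definition del_edge (T : finType) (e : rel T) (u v : T) : rel T :=
  fun x y => e x y && ~~ (((x == u) && (y == v)) || ((x == v) && (y == u))).

Lemma del_edge_irr (T : finType) (e : rel T) (u v : T) :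
  irreflexive e -> irreflexive (del_edge e u v).
Proof. by move=> irr x; rewrite /del_edge irr. Qed.

(* Points of [n] = {1,..,n} are represented as elements a : 'I_n.+1 with 1 <= a. *)
(* A pair (a, b) is a stable 2-subset ab of [n] (with a < b). *)
Definition stable (n : nat) (p : 'I_n.+1 * 'I_n.+1) : bool :=
  let a := val p.1 in let b := val p.2 in
  [&& 1 <= a, a < b, b != a.+1 & ~~ ((a == 1) && (b == n))].

Definition Gvert (n : nat) : finType := {p : 'I_n.+1 * 'I_n.+1 | @stable n p}.

Definition adj_ord (n : nat) (x y : Gvert n) : bool :=
  let a := val (val x).1 in let b := val (val x).2 in
  let c := val (val y).1 in let d := val (val y).2 in
  [&& a < c,
      [&& a != c, a != d, b != c & b != d] &
      ((a < c < b) && (b < d)) || [&& 1 < a, a < c, c < d & d < b]].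

Definition Gadj (n : nat) : rel (Gvert n) := fun x y => adj_ord x y || adj_ord y x.

Lemma Gadj_irr (n : nat) : irreflexive (@Gadj n).
Proof. by move=> x; rewrite /Gadj /adj_ord ltnn. Qed.

From mathcomp Require Import zify.
From mathcomp Require Import all_boot.
Set Implicit Arguments. Unset Strict Implicit. Unset Printing Implicit Defensive.

(* For p in {2, 3, n, n+1}, deleting the point p from [n+1] and relabelling
   the points above it maps G_(n+1) onto G_n, except for the star of p (an
   independent set) and one pair X_p that becomes non-stable; every neighbour
   of X_p lies in the star of p.
   Lower bound: given a k-colouring of G_(n+1), lift G_n into it by inserting
   the point 2.  A lifted vertex (x,y) coloured like X_2 = (1,3) takes instead
   the colour of its shadow (2,y+1), which is adjacent to (1,3) and to every
   neighbour of the lift; the colour of (1,3) is then unused, so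
   chi(G_n) <= chi(G_(n+1)) - 1, and G_4 is a single edge.
   Criticality, by induction on n: an edge e of G_(n+1) avoiding the star of
   some such p and X_p is an edge of G_n, and G_(n+1) - e is coloured by
   G_n - e, one new colour for the star, and any old colour for X_p.  The only
   edges meeting all four stars are (2,n)(3,n+1) and (2,n+1)(3,n), which are
   coloured explicitly.  The upper bound follows from chi(G) <= chi(G - e) + 1. *)

Lemma colorableP (T : finType) (e : rel T) k :
  reflect (exists f : T -> nat, (forall x, f x < k) /\ (forall x y, e x y -> f x != f y))
          (colorable e k).
Proof.
apply: (iffP existsP) => [[f /forallP fP] | [f [f_lt fP]]].
  exists (fun x => nat_of_ord (f x)); split=> // x y exy.
  exact: implyP (forallP (fP x) y) exy.
exists [ffun x => Ordinal (f_lt x)]; apply/forallP => x; apply/forallP => y.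
by apply/implyP => /fP; rewrite !ffunE.
Qed.

Lemma chi_min (T : finType) (e : rel T) (irr : irreflexive e) k :
  colorable e k -> chi irr <= k.
Proof. by rewrite /chi; case: ex_minnP => m _; apply. Qed.

Lemma chi_colorable (T : finType) (e : rel T) (irr : irreflexive e) :
  colorable e (chi irr).
Proof. by rewrite /chi; case: ex_minnP. Qed.

Lemma colorable_del_edgeC (T : finType) (e : rel T) u v k :
  colorable (del_edge e u v) k = colorable (del_edge e v u) k.
Proof.
apply: eq_existsb => f; apply: eq_forallb => x; apply: eq_forallb => y.
by rewrite /del_edge orbC.
Qed.

Lemma colorable_del_edge (T : finType) (e : rel T) (irr : irreflexive e) u v k :
  colorable (del_edge e u v) k -> colorable e k.+1.
Proof.
move=> /colorableP [f [f_lt fP]]; apply/colorableP.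
exists (fun x => if x == u then k else f x); split=> [x | x y exy] /=.
  by case: ifP => _; [exact: ltnSn | exact: ltnW (f_lt x)].
case: (eqVneq x u) => [xu | xu]; case: (eqVneq y u) => [yu | yu].
- by rewrite xu yu irr in exy.
- by rewrite eq_sym neq_ltn f_lt.
- by rewrite neq_ltn f_lt.
- by apply: fP; rewrite /del_edge exy (negbTE xu) (negbTE yu) andbF.
Qed.

Definition stable_pair (n a b : nat) : Prop :=
  1 <= a /\ a.+1 < b /\ b <= n /\ ~ (a = 1 /\ b = n).

Definition adj_pair (a b c d : nat) : Prop :=
  a < c /\ a <> d /\ b <> c /\ b <> d /\ (c < b < d \/ 1 < a /\ c < d < b).

Definition lo n (x : Gvert n) : nat := val (val x).1.
Definition hi n (x : Gvert n) : nat := val (val x).2.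

Lemma stable_Gvert n (x : Gvert n) : stable_pair n (lo x) (hi x).
Proof.
case: x => [[a b] /= ab_stable]; rewrite /lo /hi /=.
by move: ab_stable (ltn_ord b); rewrite /stable /stable_pair /=; lia.
Qed.

Lemma adj_ordE n (x y : Gvert n) :
  adj_ord x y <-> adj_pair (lo x) (hi x) (lo y) (hi y).
Proof.
move: (stable_Gvert x) (stable_Gvert y).
by rewrite /adj_ord /adj_pair /stable_pair /lo /hi; split; lia.
Qed.

Lemma Gvert_inj n (x y : Gvert n) : lo x = lo y -> hi x = hi y -> x = y.
Proof.
case: x y => [[a b] ?] [[c d] ?]; rewrite /lo /hi /= => ac bd.
by apply: val_inj; rewrite /= (ord_inj ac) (ord_inj bd).
Qed.

Lemma Gvert_of_stable n a b :
  stable_pair n a b -> exists x : Gvert n, lo x = a /\ hi x = b.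
Proof.
move=> ab_stable; have ab_stable' : stable (n := n) (inord a, inord b).
  by rewrite /stable /= !inordK; move: ab_stable; rewrite /stable_pair; lia.
exists (exist (@stable n) _ ab_stable'); rewrite /lo /hi /= !inordK //.
all: by move: ab_stable; rewrite /stable_pair; lia.
Qed.

Definition pair_coloring n k (F : nat -> nat -> nat) : Prop :=
  (forall a b, stable_pair n a b -> F a b < k) /\
  (forall a b c d, stable_pair n a b -> stable_pair n c d -> adj_pair a b c d ->
     F a b <> F c d).

Definition pair_coloring_but n k a0 b0 c0 d0 (F : nat -> nat -> nat) : Prop :=
  (forall a b, stable_pair n a b -> F a b < k) /\
  (forall a b c d, stable_pair n a b -> stable_pair n c d -> adj_pair a b c d ->
     ~ (a = a0 /\ b = b0 /\ c = c0 /\ d = d0) -> F a b <> F c d).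

Lemma pair_coloring_of_colorable n k :
  colorable (@Gadj n) k -> exists F, pair_coloring n k F.
Proof.
move=> /colorableP [f [f_lt fP]].
pose F a b := if [pick x : Gvert n | (lo x == a) && (hi x == b)] is Some x then f x else 0.
have FE x : F (lo x) (hi x) = f x.
  rewrite /F; case: pickP => [y /andP [/eqP lo_yx /eqP hi_yx] | /(_ x)].
    by rewrite (Gvert_inj lo_yx hi_yx).
  by rewrite !eqxx.
exists F; split=> [a b /Gvert_of_stable [x [<- <-]] | a b c d].
  by rewrite FE.
move=> /Gvert_of_stable [x [<- <-]] /Gvert_of_stable [y [<- <-]] /adj_ordE xy.
by rewrite !FE; apply/eqP/fP; rewrite /Gadj xy.
Qed.

Lemma colorable_of_pair_coloring_but n k (u v : Gvert n) F :
  pair_coloring_but n k (lo u) (hi u) (lo v) (hi v) F ->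
  colorable (del_edge (@Gadj n) u v) k.
Proof.
move=> [F_lt FP]; apply/colorableP.
exists (fun x => F (lo x) (hi x)); split=> [x | x y].
  exact: F_lt (stable_Gvert x).
rewrite /del_edge /Gadj => /andP [/orP [] /adj_ordE xy not_uv]; apply/eqP.
  apply: FP (stable_Gvert x) (stable_Gvert y) xy _ => -[lo_xu [hi_xu [lo_yv hi_yv]]].
  by move: not_uv; rewrite (Gvert_inj lo_xu hi_xu) (Gvert_inj lo_yv hi_yv) !eqxx.
move/esym; apply: FP (stable_Gvert y) (stable_Gvert x) xy _.
move=> -[lo_yu [hi_yu [lo_xv hi_xv]]].
by move: not_uv; rewrite (Gvert_inj lo_yu hi_yu) (Gvert_inj lo_xv hi_xv) !eqxx orbT.
Qed.

(* Relabelling of the points when a point p is inserted into, resp. deleted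
   from, the ground set; [drop] also closes the gap left by a discarded colour. *)
Definition ins p s := s + (p <= s).
Definition drop p s := s - (p < s).

Lemma adj_ins p x y z w :
  2 <= p -> adj_pair x y z w -> adj_pair (ins p x) (ins p y) (ins p z) (ins p w).
Proof. by rewrite /adj_pair /ins; lia. Qed.

Lemma stable_ins2 n x y : stable_pair n x y -> stable_pair n.+1 (ins 2 x) (ins 2 y).
Proof. by rewrite /stable_pair /ins; lia. Qed.

Lemma adj_shadow n x y z w :
  stable_pair n x y -> stable_pair n z w -> adj_pair x y z w \/ adj_pair z w x y ->
  adj_pair 2 (ins 2 y) (ins 2 z) (ins 2 w) \/ adj_pair (ins 2 z) (ins 2 w) 2 (ins 2 y).
Proof.
rewrite /stable_pair /adj_pair /ins => xy zw [adj_xz | adj_zx]; first by left; lia.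
by have [z1 | z_gt1] := ltnP 1 z; [left | right]; lia.
Qed.

Lemma adj_13_shadow n x y : stable_pair n x y -> adj_pair 1 3 2 (ins 2 y).
Proof. by rewrite /stable_pair /adj_pair /ins; lia. Qed.

Lemma pair_coloring_sym n k F a b c d : pair_coloring n k F ->
  stable_pair n a b -> stable_pair n c d -> adj_pair a b c d \/ adj_pair c d a b ->
  F a b <> F c d.
Proof. by move=> [_ FP] ab cd [/(FP _ _ _ _ ab cd) | /(FP _ _ _ _ cd ab) + /esym]. Qed.

Lemma pair_coloring_shrink n k F :
  4 <= n -> pair_coloring n.+1 k F -> exists G, pair_coloring n k.-1 G.
Proof.
move=> n_ge4 F_col; have [F_lt _] := F_col.
have s13 : stable_pair n.+1 1 3 by rewrite /stable_pair; lia.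
have shadow_stable x y : stable_pair n x y -> stable_pair n.+1 2 (ins 2 y).
  by rewrite /stable_pair /ins; lia.
pose alpha := F 1 3.
pose G x y :=
  if F (ins 2 x) (ins 2 y) == alpha then F 2 (ins 2 y) else F (ins 2 x) (ins 2 y).
have G_lt x y : stable_pair n x y -> G x y < k.
  move=> xy; rewrite /G; case: eqP => _; apply: F_lt.
    exact: shadow_stable xy.
  exact: stable_ins2.
have G_alpha x y : stable_pair n x y -> G x y <> alpha.
  move=> xy; rewrite /G; case: eqP => // _.
  apply: pair_coloring_sym F_col (shadow_stable _ _ xy) s13 _.
  by right; exact: adj_13_shadow xy.
have GP x y z w :
    stable_pair n x y -> stable_pair n z w -> adj_pair x y z w -> G x y <> G z w.
  move=> xy zw adj_xz; have ins_xz := adj_ins (leqnn 2) adj_xz.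
  have [sxy szw] := (stable_ins2 xy, stable_ins2 zw).
  rewrite /G; case: eqP => [x_alpha | _]; case: eqP => [z_alpha | _].
  - by move: (pair_coloring_sym F_col sxy szw (or_introl ins_xz)); rewrite x_alpha z_alpha.
  - apply: pair_coloring_sym F_col (shadow_stable _ _ xy) szw _.
    exact: adj_shadow xy zw (or_introl adj_xz).
  - apply: pair_coloring_sym F_col sxy (shadow_stable _ _ zw) _.
    by case: (adj_shadow zw xy (or_intror adj_xz)) => ?; [right | left].
  - exact: pair_coloring_sym F_col sxy szw (or_introl ins_xz).
exists (fun x y => drop alpha (G x y)); split=> [x y xy | x y z w xy zw adj_xz].
  by move: (G_lt x y xy) (G_alpha x y xy) (F_lt 1 3 s13); rewrite /drop; lia.
by move: (GP x y z w xy zw adj_xz) (G_alpha x y xy) (G_alpha z w zw); rewrite /drop; lia.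
Qed.

Lemma pair_coloring_lb n k F : 4 <= n -> pair_coloring n k F -> n - 2 <= k.
Proof.
elim: n k F => // n IH k F n1_ge4 F_col; have [F_lt _] := F_col.
have [n_lt4 | n_ge4] := ltnP n 4.
  have s13 : stable_pair n.+1 1 3 by rewrite /stable_pair; lia.
  have s24 : stable_pair n.+1 2 4 by rewrite /stable_pair; lia.
  have adj_13_24 : adj_pair 1 3 2 4 by rewrite /adj_pair; lia.
  have := pair_coloring_sym F_col s13 s24 (or_introl adj_13_24).
  by move: (F_lt _ _ s13) (F_lt _ _ s24); lia.
have [G G_col] := pair_coloring_shrink n_ge4 F_col.
by have := IH _ _ n_ge4 G_col; lia.
Qed.

(* X_p: the pair of [n+1] that becomes non-stable when the point p is deleted,
   namely (p-1, p+1), or (1, n) when p = n+1. *)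
Definition hub (n p x y : nat) : bool :=
  ((p == n.+1) && (x == 1) && (y == n)) || ((p != n.+1) && (x.+1 == p) && (y == p.+1)).

Definition in_star (p x y : nat) : bool := (x == p) || (y == p).

Definition off_star n p a b c d : bool :=
  [&& ~~ in_star p a b, ~~ in_star p c d, ~~ hub n p a b & ~~ hub n p c d].

(* The star of p takes the new colour k; the hub, whose neighbours all lie in
   the star, reuses the colour 0. *)
Definition extend n p k (F : nat -> nat -> nat) x y : nat :=
  if in_star p x y then k else if hub n p x y then 0 else F (drop p x) (drop p y).

Lemma stable_drop n p x y : 2 <= p <= n.+1 ->
  stable_pair n.+1 x y -> ~~ in_star p x y -> ~~ hub n p x y ->
  stable_pair n (drop p x) (drop p y).
Proof. by rewrite /stable_pair /in_star /hub /drop; lia. Qed.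

Lemma adj_drop p x y z w : 2 <= p -> ~~ in_star p x y -> ~~ in_star p z w ->
  adj_pair x y z w -> adj_pair (drop p x) (drop p y) (drop p z) (drop p w).
Proof.
rewrite /adj_pair /in_star /drop => p_ge2 /norP [/eqP xp /eqP yp] /norP [/eqP zp /eqP wp].
move=> [x_z [x_w [y_z [y_w [cross | nest]]]]]; do 4 (split; first by lia).
  by left; lia.
by right; lia.
Qed.

Lemma drop_inj p x y : x != p -> y != p -> drop p x = drop p y -> x = y.
Proof. by rewrite /drop; lia. Qed.

Lemma hub_adj n p x y z w : 4 <= n -> p \in [:: 2; 3; n; n.+1] ->
  hub n p x y -> stable_pair n.+1 z w -> adj_pair x y z w \/ adj_pair z w x y ->
  in_star p z w.
Proof.
move=> n_ge4; rewrite /hub /stable_pair /adj_pair /in_star !inE.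
by case/or4P => /eqP ->; lia.
Qed.

Lemma pair_coloring_but_extend n p k F a b c d :
  4 <= n -> p \in [:: 2; 3; n; n.+1] -> 0 < k -> off_star n p a b c d ->
  pair_coloring_but n k (drop p a) (drop p b) (drop p c) (drop p d) F ->
  pair_coloring_but n.+1 k.+1 a b c d (extend n p k F).
Proof.
move=> n_ge4 p_del k_gt0 e_off [F_lt FP].
have p_range : 2 <= p <= n.+1 by move: p_del; rewrite !inE; lia.
have old_lt x y : stable_pair n.+1 x y -> ~~ in_star p x y -> extend n p k F x y < k.
  move=> xy x_off; rewrite /extend (negbTE x_off); case: ifP => // x_hub.
  by apply: F_lt; apply: stable_drop; rewrite ?x_hub.
split=> [x y xy | x y z w xy zw adj_xz not_e].
  case x_star: (in_star p x y); first by rewrite /extend x_star.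
  exact: ltnW (old_lt x y xy (negbT x_star)).
have [x_star | x_off] := boolP (in_star p x y); have [z_star | z_off] := boolP (in_star p z w).
- by move: adj_xz x_star z_star; rewrite /adj_pair /in_star; lia.
- by move: (old_lt z w zw z_off); rewrite /extend x_star; lia.
- by move: (old_lt x y xy x_off); rewrite /extend z_star; lia.
rewrite /extend (negbTE x_off) (negbTE z_off).
case: ifP => [x_hub | /negbT x_nhub].
  by move: (hub_adj n_ge4 p_del x_hub zw (or_introl adj_xz)); rewrite (negbTE z_off).
case: ifP => [z_hub | /negbT z_nhub].
  by move: (hub_adj n_ge4 p_del z_hub xy (or_intror adj_xz)); rewrite (negbTE x_off).
have p_ge2 : 2 <= p by case/andP: p_range.
apply: FP; [exact: stable_drop | exact: stable_drop | exact: adj_drop | ].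
case/and4P: e_off => /norP [ap bp] /norP [cp dp] _ _.
case/norP: x_off => xp yp; case/norP: z_off => zp wp.
move=> [/(drop_inj xp ap) xa [/(drop_inj yp bp) yb
         [/(drop_inj zp cp) zc /(drop_inj wp dp) wd]]].
exact: not_e.
Qed.

Lemma in_star_of_not_off n p a b c d : 4 <= n -> p \in [:: 2; 3; n; n.+1] ->
  stable_pair n.+1 a b -> stable_pair n.+1 c d -> adj_pair a b c d ->
  ~~ off_star n p a b c d -> in_star p a b || in_star p c d.
Proof.
move=> n_ge4 p_del ab cd adj_ac; rewrite /off_star.
case: (boolP (hub n p a b)) => [ab_hub | _].
  by rewrite (hub_adj n_ge4 p_del ab_hub cd (or_introl adj_ac)) orbT.
case: (boolP (hub n p c d)) => [cd_hub | _].
  by rewrite (hub_adj n_ge4 p_del cd_hub ab (or_intror adj_ac)).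
by rewrite !andbT -negb_or negbK.
Qed.

Lemma off_star_or_residual n a b c d : 4 <= n ->
  stable_pair n.+1 a b -> stable_pair n.+1 c d -> adj_pair a b c d ->
  (exists2 p, p \in [:: 2; 3; n; n.+1] & off_star n p a b c d) \/
  (a = 2 /\ b = n /\ c = 3 /\ d = n.+1) \/ (a = 2 /\ b = n.+1 /\ c = 3 /\ d = n).
Proof.
move=> n_ge4 ab cd adj_ac.
pose off p := off_star n p a b c d.
have [/hasP | /hasPn meets] := boolP (has off [:: 2; 3; n; n.+1]).
  by left.
have in_edge p : p \in [:: 2; 3; n; n.+1] -> a = p \/ b = p \/ c = p \/ d = p.
  move=> p_del; have := in_star_of_not_off n_ge4 p_del ab cd adj_ac (meets p p_del).
  by rewrite /in_star => /orP [/orP [] | /orP []] /eqP; tauto.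
have n_mem : n \in [:: 2; 3; n; n.+1] by rewrite !inE eqxx !orbT.
have n1_mem : n.+1 \in [:: 2; 3; n; n.+1] by rewrite !inE eqxx !orbT.
move: (in_edge 2 isT) (in_edge 3 isT) (in_edge n n_mem) (in_edge n.+1 n1_mem).
case: ab adj_ac => a_ge1 [a_b _] [a_c [_ [_ [_ [/andP [c_b b_d] | [_ /andP [c_d d_b]]]]]]].
all: lia.
Qed.

(* Pairs meeting [4, m-2] are coloured by such a point, so each of these
   colour classes is a star; the remaining pairs lie inside {1,2,3,m-1,m} and
   are 2-coloured once (2,m-1)(3,m) is deleted. *)
Definition crossing_coloring m x y :=
  if 4 <= x <= m - 2 then x - 2 else if 4 <= y <= m - 2 then y - 2
  else if (x == 2) || (y == m) then 0 else 1.

Lemma crossing_coloring_classes m x y c : 5 <= m -> stable_pair m x y ->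
  crossing_coloring m x y = c ->
  [/\ c < m - 3,
      c = 0 -> x = 2 /\ m.-1 <= y \/ x = 3 /\ y = m,
      c = 1 -> x = 1 /\ y = 3 \/ x = 1 /\ y = m.-1 \/ x = 3 /\ y = m.-1 &
      1 < c -> x = c + 2 \/ y = c + 2].
Proof.
move=> m_ge5 xy <-; move: xy; rewrite /crossing_coloring /stable_pair.
by repeat case: ifP; split; lia.
Qed.

Lemma crossing_coloringP m :
  5 <= m -> pair_coloring_but m (m - 3) 2 m.-1 3 m (crossing_coloring m).
Proof.
move=> m_ge5; split=> [x y xy | x y z w xy zw adj_xz not_e same].
  by case: (crossing_coloring_classes m_ge5 xy erefl).
have [_ x0 x1 x2] := crossing_coloring_classes m_ge5 xy erefl.
have [_ z0 z1 z2] := crossing_coloring_classes m_ge5 zw (esym same).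
move: adj_xz not_e xy zw; rewrite /adj_pair /stable_pair.
case: (crossing_coloring m x y) x0 x1 x2 z0 z1 z2 => [|[|c]] x0 x1 x2 z0 z1 z2.
- by case: (x0 erefl) => [[-> ?] | [-> ->]]; case: (z0 erefl) => [[-> ?] | [-> ->]]; lia.
- by case: (x1 erefl) => [[-> ->] | [[-> ->] | [-> ->]]];
    case: (z1 erefl) => [[-> ->] | [[-> ->] | [-> ->]]]; lia.
- by case: (x2 isT) => ->; case: (z2 isT) => ->; lia.
Qed.

(* Colour a pair by its first endpoint other than 1, except that
   (2,m-1), (2,m), (3,m-1) form a class of their own: this lets (1,m-2) and
   (1,m-1) join the pairs (2,_) and (m-2,m) join the pairs (3,_). *)
Definition nested_coloring m x y :=
  if ((x == 2) && (m.-1 <= y)) || ((x == 3) && (y == m.-1)) then 0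
  else if x == 1 then (if m - 2 <= y then 1 else y.-1)
  else if x == m - 2 then 2 else x.-1.

Lemma nested_coloring_classes m x y c : 6 <= m -> stable_pair m x y ->
  nested_coloring m x y = c ->
  [/\ c < m - 3,
      c = 0 -> x = 2 /\ m.-1 <= y \/ x = 3 /\ y = m.-1,
      c = 1 -> x = 1 /\ m - 2 <= y \/ x = 2 /\ y <= m - 2,
      c = 2 -> x = 1 /\ y = 3 \/ x = 3 /\ y <> m.-1 \/ x = m - 2 /\ y = m &
      2 < c -> x = c.+1 \/ x = 1 /\ y = c.+1].
Proof.
move=> m_ge6 xy <-; move: xy; rewrite /nested_coloring /stable_pair.
by repeat case: ifP; split; lia.
Qed.

Lemma nested_coloringP m :
  6 <= m -> pair_coloring_but m (m - 3) 2 m 3 m.-1 (nested_coloring m).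
Proof.
move=> m_ge6; split=> [x y xy | x y z w xy zw adj_xz not_e same].
  by case: (nested_coloring_classes m_ge6 xy erefl).
have [_ x0 x1 x2 x3] := nested_coloring_classes m_ge6 xy erefl.
have [_ z0 z1 z2 z3] := nested_coloring_classes m_ge6 zw (esym same).
move: adj_xz not_e xy zw; rewrite /adj_pair /stable_pair.
case: (nested_coloring m x y) x0 x1 x2 x3 z0 z1 z2 z3 => [|[|[|c]]] x0 x1 x2 x3 z0 z1 z2 z3.
- by case: (x0 erefl) => [[-> ?] | [-> ->]]; case: (z0 erefl) => [[-> ?] | [-> ->]]; lia.
- by case: (x1 erefl) => [[-> ?] | [-> ?]]; case: (z1 erefl) => [[-> ?] | [-> ?]]; lia.
- by case: (x2 erefl) => [[-> ->] | [[-> ?] | [-> ->]]];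
    case: (z2 erefl) => [[-> ->] | [[-> ?] | [-> ->]]]; lia.
- by case: (x3 isT) => [-> | [-> ->]]; case: (z3 isT) => [-> | [-> ->]]; lia.
Qed.

Lemma pair_coloring_but_exists m a b c d : 4 <= m ->
  stable_pair m a b -> stable_pair m c d -> adj_pair a b c d ->
  exists F, pair_coloring_but m (m - 3) a b c d F.
Proof.
elim: m a b c d => // n IH a b c d n1_ge4 ab cd adj_ac.
have [n_lt4 | n_ge4] := ltnP n 4.
  exists (fun _ _ => 0); split=> [x y _ | x y z w xy zw adj_xz not_e]; first by lia.
  by move: ab cd adj_ac xy zw adj_xz not_e; rewrite /stable_pair /adj_pair; lia.
case: (off_star_or_residual n_ge4 ab cd adj_ac) => [[p p_del e_off] | [E | E]].
- have p_range : 2 <= p <= n.+1 by move: p_del; rewrite !inE; lia.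
  have p_ge2 : 2 <= p by case/andP: p_range.
  case/and4P: (e_off) => ab_off cd_off ab_nhub cd_nhub.
  have [F F_col] := IH _ _ _ _ n_ge4 (stable_drop p_range ab ab_off ab_nhub)
    (stable_drop p_range cd cd_off cd_nhub) (adj_drop p_ge2 ab_off cd_off adj_ac).
  exists (extend n p (n - 3) F); rewrite (_ : n.+1 - 3 = (n - 3).+1); last by lia.
  by apply: pair_coloring_but_extend => //; lia.
- case: E => [? [? [? ?]]]; subst; exists (crossing_coloring n.+1).
  exact: crossing_coloringP.
- case: E => [? [? [? ?]]]; subst; exists (nested_coloring n.+1).
  by apply: nested_coloringP; move: cd; rewrite /stable_pair; lia.
Qed.

Lemma colorable_del_Gadj n (u v : Gvert n) :
  4 <= n -> Gadj u v -> colorable (del_edge (@Gadj n) u v) (n - 3).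
Proof.
have oriented (x y : Gvert n) :
    4 <= n -> adj_ord x y -> colorable (del_edge (@Gadj n) x y) (n - 3).
  move=> n_ge4 /adj_ordE xy.
  have [F F_col] := pair_coloring_but_exists n_ge4 (stable_Gvert x) (stable_Gvert y) xy.
  exact: colorable_of_pair_coloring_but F_col.
by move=> n_ge4 /orP [/oriented -> // | /oriented]; rewrite colorable_del_edgeC => ->.
Qed.

Lemma Gadj_exists n : 4 <= n -> exists u v : Gvert n, Gadj u v.
Proof.
move=> n_ge4.
have [u [lo_u hi_u]] : exists u : Gvert n, lo u = 1 /\ hi u = 3.
  by apply: Gvert_of_stable; rewrite /stable_pair; lia.
have [v [lo_v hi_v]] : exists v : Gvert n, lo v = 2 /\ hi v = 4.
  by apply: Gvert_of_stable; rewrite /stable_pair; lia.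
exists u, v; apply/orP; left; apply/adj_ordE.
by rewrite lo_u hi_u lo_v hi_v /adj_pair; lia.
Qed.

Theorem theorem1 (n : nat) (hn : 4 <= n) :
  chi (@Gadj_irr n) = n - 2 /\
  (forall u v : Gvert n, Gadj u v ->
     chi (del_edge_irr u v (@Gadj_irr n)) < chi (@Gadj_irr n)).
Proof.
have chi_ub : chi (@Gadj_irr n) <= n - 2.
  have [u [v uv]] := Gadj_exists hn.
  rewrite (_ : n - 2 = (n - 3).+1); last by lia.
  exact: chi_min (colorable_del_edge (@Gadj_irr n) (colorable_del_Gadj hn uv)).
have chi_lb : n - 2 <= chi (@Gadj_irr n).
  have [F F_col] := pair_coloring_of_colorable (chi_colorable (@Gadj_irr n)).
  exact: pair_coloring_lb hn F_col.
have chi_G : chi (@Gadj_irr n) = n - 2 by apply/eqP; rewrite eqn_leq chi_ub chi_lb.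
split=> // u v uv; rewrite chi_G.
by apply: leq_ltn_trans (chi_min _ (colorable_del_Gadj hn uv)) _; lia.
Qed.
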